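(* Let $\mathcal{G}$ be an étale groupoid injectively graded by a countable discrete abelian group $A$ via $\Phi:\mathcal{G}\to A$, let $c:\mathcal{G}\to\mathbb{R}$ be a continuous groupoid homomorphism, $\beta\in\mathbb{R}$, and let $\mu\in\Delta(e^{-\beta c})\setminus\{0\}$ be ergodic. Then: (1) for every subgroup $C\subseteq A$, the set $X(C)=\{x\in\mathcal{G}^{(0)}:\Phi(\mathcal{G}^x_x)=C\}$ is Borel and invariant; (2) there is a unique subgroup $B\subseteq A$ with $\mu(\mathcal{G}^{(0)}\setminus X(B))=0$; (3) for $x\in X(B)$ let $\Phi_x:C^*(\mathcal{G}^x_x)\to C^*(B)$ be the isomorphism induced by $\Phi|_{\mathcal{G}^x_x}$ ($u_g\mapsto u_{\Phi(g)}$); if $\{\varphi_x\}_{x\in\mathcal{G}^{(0)}}$ is a $\mu$-measurable field of states with $\varphi_x(u_g)=\varphi_{r(h)}(u_{hgh^{-1}})$ for $\mu$-a.e. $x$ and all $g\in\mathcal{G}^x_x$, $h\in\mathcal{G}_x$, then there is a state $\varphi$ on $C^*(B)$ such that $\varphi\circ\Phi_x=\varphi_x$ for $\mu$-a.e. $x\in X(B)$.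
   Context: Étale groupoid: locally compact second countable Hausdorff groupoid with range $r$, source $s$ local homeomorphisms; $\mathcal{G}_x=s^{-1}(x)$, $\mathcal{G}^x_x=r^{-1}(x)\cap s^{-1}(x)$. $\mathcal{G}$ is injectively graded by $A$ via $\Phi$ if $\Phi:\mathcal{G}\to A$ is a continuous groupoid homomorphism with $\ker(\Phi)\cap\mathcal{G}^x_x=\{x\}$ for all $x\in\mathcal{G}^{(0)}$. $\Delta(e^{-\beta c})$: regular Borel measures on $\mathcal{G}^{(0)}$ quasi-invariant with Radon–Nikodym cocycle $e^{-\beta c}$, i.e. $\mu_r\sim\mu_s$ and $d\mu_r/d\mu_s=e^{-\beta c}$, where $\int f\,d\mu_r=\int\sum_{g\in r^{-1}(x)}f(g)\,d\mu(x)$, $\int f\,d\mu_s=\int\sum_{g\in s^{-1}(x)}f(g)\,d\mu(x)$ for $f\in C_c(\mathcal{G})$. A set $Y\subseteq\mathcal{G}^{(0)}$ is invariant if $Y=r(s^{-1}(Y))$; $\mu$ is ergodic if every invariant Borel set is null or conull. $u_g$ denote canonical unitaries in group $C^*$-algebras. A $\mu$-measurable field of states is a family of states $\varphi_x$ on $C^*(\mathcal{G}^x_x)$ with $x\mapsto\sum_{g\in\mathcal{G}^x_x}f(g)\varphi_x(u_g)$ $\mu$-measurable for all $f\in C_c(\mathcal{G})$. *)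

From HB Require Import structures.
From mathcomp Require Import all_boot all_order all_algebra.
From mathcomp Require Import all_classical all_reals all_analysis.
From mathcomp Require Import complex.
Set Implicit Arguments. Unset Strict Implicit. Unset Printing Implicit Defensive.
Import Order.TTheory GRing.Theory Num.Theory.
Import numFieldNormedType.Exports.
Local Open Scope classical_set_scope.
Local Open Scope ring_scope.

Definition Borel (X : ptopologicalType) := g_sigma_algebraType (@open X).

Section Groupoid.
(* Unit space X, arrow space G, range r, source s, unit map u : X -> G
   (x |-> the unit at x), partially defined multiplication mul (meaningful
   when s g = r h, i.e. mul g h = gh) and inverse inv. *)
Context (X : ptopologicalType) (G : topologicalType)
  (r s : G -> X) (u : X -> G) (mul : G -> G -> G) (inv : G -> G).

Definition groupoid_axioms : Prop :=
  [/\ (forall x, r (u x) = x /\ s (u x) = x),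
      (forall g, mul (u (r g)) g = g /\ mul g (u (s g)) = g),
      (forall g h, s g = r h -> r (mul g h) = r g /\ s (mul g h) = s h),
      (forall g h k, s g = r h -> s h = r k ->
         mul (mul g h) k = mul g (mul h k)) &
      ((forall g, r (inv g) = s g /\ s (inv g) = r g) /\
      (forall g, mul g (inv g) = u (r g) /\ mul (inv g) g = u (s g)))].

(* topological groupoid: all structure maps continuous, multiplication
   continuous on the composable pairs G^(2) (product topology); continuity
   of u and r makes u a homeomorphism of X onto the unit space of G. *)
Definition topological_groupoid : Prop :=
  [/\ continuous r, continuous s, continuous u, continuous inv &
      {within [set p : G * G | s p.1 = r p.2],
         continuous (fun p : G * G => mul p.1 p.2)}].

Definition local_homeomorphism (f : G -> X) : Prop :=
  continuous f /\
  forall g, exists U : set G,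
    [/\ open U, U g,
        (forall a b, U a -> U b -> f a = f b -> a = b) &
        (forall V, open V -> V `<=` U -> open (f @` V))].

Definition etale_groupoid : Prop :=
  [/\ groupoid_axioms, topological_groupoid,
      hausdorff_space G /\ locally_compact [set: G] /\ @second_countable G,
      local_homeomorphism r & local_homeomorphism s].

Definition isotropy (x : X) : set G := [set g | r g = x /\ s g = x].

Definition groupoid_invariant (Y : set X) : Prop := r @` (s @^-1` Y) = Y.

(* Phi : G -> A is a continuous groupoid homomorphism into the discrete group
   A (continuity into a discrete space = preimages of points are open) with
   ker(Phi) /\ G^x_x = {x} for every unit x. *)
Definition injective_grading (A : zmodType) (Phi : G -> A) : Prop :=
  [/\ (forall a : A, open (Phi @^-1` [set a])),
      (forall g h, s g = r h -> Phi (mul g h) = Phi g + Phi h) &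
      (forall x g, isotropy x g -> Phi g = 0 -> g = u x)].

Definition XC (A : zmodType) (Phi : G -> A) (C : set A) : set X :=
  [set x | Phi @` isotropy x = C].

Variable R : realType.

Definition continuous_hom (c : G -> R) : Prop :=
  continuous c /\ (forall g h, s g = r h -> c (mul g h) = c g + c h).

Definition Cc (f : G -> R) : Prop :=
  continuous f /\ compact (closure [set g | f g != 0]).

Definition regular_borel (mu : {measure set (Borel X) -> \bar R}) : Prop :=
  [/\ (forall K : set X, compact K -> (mu K < +oo)%E),
      (forall E : set (Borel X), measurable E ->
         mu E = ereal_inf [set mu U | U in [set U : set X | open U /\ E `<=` U]]) &
      (forall E : set (Borel X), measurable E ->
         mu E = ereal_sup [set mu K | K in [set K : set X | compact K /\ K `<=` E]])].

(* mu in Delta(e^{-beta c}): mu is a regular Borel measure with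
   d mu_r = e^{-beta c} d mu_s, where mu_r, mu_s are the measures on G given on
   f in C_c(G) by  int f dmu_r = int sum_{g in r^-1(x)} f(g) dmu(x)  and
   int f dmu_s = int sum_{g in s^-1(x)} f(g) dmu(x). *)
Definition in_Delta (beta : R) (c : G -> R)
    (mu : {measure set (Borel X) -> \bar R}) : Prop :=
  regular_borel mu /\
  forall f : G -> R, Cc f ->
    (\int[mu]_(x in setT) (\sum_(g \in r @^-1` [set x]) f g)%:E =
     \int[mu]_(x in setT)
        (\sum_(g \in s @^-1` [set x]) (f g * expR (- (beta * c g))))%:E)%E.

Definition ergodic (mu : {measure set (Borel X) -> \bar R}) : Prop :=
  forall Y : set (Borel X), measurable Y -> groupoid_invariant Y ->
    mu Y = 0%E \/ mu (~` Y) = 0%E.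

(* mu-measurable sets / functions: measurable for the mu-completion *)
Definition mu_measurable_set (mu : {measure set (Borel X) -> \bar R})
    (E : set X) : Prop :=
  exists B : set (Borel X), measurable B /\
    mu.-negligible ((E `\` B) `|` (B `\` E)).

Definition mu_measurable_fun (mu : {measure set (Borel X) -> \bar R})
    (h : X -> R) : Prop :=
  forall B : set R, measurable B -> mu_measurable_set mu (h @^-1` B).

(* A state on C*(G^x_x), recorded by its values p(g) = phi(u_g), g in G^x_x:
   phi(u_x) = phi(1) = 1 and phi(a^* a) >= 0 for every a = sum_i c_i u_{g_i}
   in the group algebra C[G^x_x] (which is dense in C*(G^x_x)). *)
Definition state_isotropy (x : X) (p : G -> R[i]) : Prop :=
  p (u x) = 1 /\
  forall n (cs : 'I_n -> R[i]) (gs : 'I_n -> G),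
    (forall k, isotropy x (gs k)) ->
    0 <= \sum_(k < n) \sum_(l < n) ((cs k)^* * cs l * p (mul (inv (gs k)) (gs l))).

(* mu-measurable field of states {phi_x}: for each f in C_c(G) (real and
   imaginary parts treated separately) the function
   x |-> sum_{g in G^x_x} f(g) phi_x(u_g) is mu-measurable. *)
Definition measurable_field_of_states (mu : {measure set (Borel X) -> \bar R})
    (phi : X -> G -> R[i]) : Prop :=
  (forall x, state_isotropy x (phi x)) /\
  forall f : G -> R, Cc f ->
    mu_measurable_fun mu
      (fun x => complex.Re (\sum_(g \in isotropy x) ((f g)%:C%C * phi x g))) /\
    mu_measurable_fun mu
      (fun x => complex.Im (\sum_(g \in isotropy x) ((f g)%:C%C * phi x g))).

End Groupoid.

Definition is_subgroup (A : zmodType) (C : set A) : Prop :=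
  C 0 /\ forall a b, C a -> C b -> C (a - b).

(* A state on C*(B), B a subgroup of the abelian group A, recorded by its
   values psi(b) = phi(u_b) for b in B (values off B are irrelevant). *)
Definition state_group (R : realType) (A : zmodType) (B : set A)
    (psi : A -> R[i]) : Prop :=
  psi 0 = 1 /\
  forall n (cs : 'I_n -> R[i]) (bs : 'I_n -> A),
    (forall k, B (bs k)) ->
    0 <= \sum_(k < n) \sum_(l < n) ((cs k)^* * cs l * psi (bs l - bs k)).

From HB Require Import structures.
From mathcomp Require Import all_boot all_order all_algebra.
From mathcomp Require Import all_classical all_reals all_analysis.
From mathcomp Require Import complex lra.
Import Order.TTheory GRing.Theory Num.Theory.
Import numFieldNormedType.Exports.
Local Open Scope classical_set_scope.
Local Open Scope ring_scope.
Set Implicit Arguments. Unset Strict Implicit. Unset Printing Implicit Defensive.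

(* For every grade a, the set of units x with a in Phi(G^x_x) is an r-image of
   a Borel subset of the etale groupoid, hence Borel; it is also invariant, so
   by ergodicity it is null or conull.  The conull grades form the subgroup B,
   and X(B) is conull because A is countable.  On X(B) the injective grading
   identifies G^x_x with B, so a field of states becomes the family of functions
   x |-> phi_x(g), g the arrow of grade b in G^x_x.  Testing the measurability
   hypothesis against bump functions supported in open bisections shows these
   functions are mu-measurable; conjugation invariance and ergodicity make each
   of them a.e. constant, and the constants form the state on C*(B). *)

Section GroupoidAlgebra.
Context (X : ptopologicalType) (G : topologicalType)
  (r s : G -> X) (u : X -> G) (mul : G -> G -> G) (inv : G -> G).
Hypothesis gpd : groupoid_axioms r s u mul inv.

Lemma r_unit x : r (u x) = x. Proof. by case: gpd => /(_ x) []. Qed.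
Lemma s_unit x : s (u x) = x. Proof. by case: gpd => /(_ x) []. Qed.

Lemma rs_mul g h : s g = r h -> r (mul g h) = r g /\ s (mul g h) = s h.
Proof. by case: gpd => _ _ + _ _; apply. Qed.

Lemma r_inv g : r (inv g) = s g. Proof. by case: gpd => _ _ _ _ [/(_ g) []]. Qed.
Lemma s_inv g : s (inv g) = r g. Proof. by case: gpd => _ _ _ _ [/(_ g) []]. Qed.

Lemma mulV g : mul g (inv g) = u (r g).
Proof. by case: gpd => _ _ _ _ [_ /(_ g) []]. Qed.

Lemma unit_mul g : mul (u (r g)) g = g. Proof. by case: gpd => _ /(_ g) []. Qed.
Lemma mul_unit g : mul g (u (s g)) = g. Proof. by case: gpd => _ /(_ g) []. Qed.

Lemma mulA g h k : s g = r h -> s h = r k -> mul (mul g h) k = mul g (mul h k).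
Proof. by case: gpd => _ _ _ + _; apply. Qed.

Lemma isotropy_unit x : isotropy r s x (u x).
Proof. by split; rewrite ?r_unit ?s_unit. Qed.

Lemma isotropy_mulV x g g' : isotropy r s x g -> isotropy r s x g' ->
  isotropy r s x (mul (inv g') g).
Proof.
move=> [rg sg] [rg' sg']; have c : s (inv g') = r g by rewrite s_inv rg rg'.
by have [rm sm] := rs_mul c; split; rewrite ?rm ?sm ?r_inv.
Qed.

Lemma isotropy_conj x g h : isotropy r s x g -> s h = x ->
  isotropy r s (r h) (mul (mul h g) (inv h)).
Proof.
move=> [rg sg] sh; have c1 : s h = r g by rewrite sh rg.
have [rhg shg] := rs_mul c1.
have c2 : s (mul h g) = r (inv h) by rewrite shg r_inv sg sh.
by have [rm sm] := rs_mul c2; split; rewrite ?rm ?sm ?rhg ?s_inv.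
Qed.

Lemma saturation_invariant (S : set X) :
  groupoid_invariant r s (r @` (s @^-1` S)).
Proof.
apply/seteqP; split; last by move=> x Sx; exists (u x); rewrite /= ?s_unit ?r_unit.
move=> y [h [g /= Sg /esym shg] <-].
by have [rhg s_hg] := rs_mul shg; exists (mul h g); rewrite //= s_hg.
Qed.

Variables (A : zmodType) (Phi : G -> A).
Hypothesis grading : injective_grading r s u mul Phi.

Lemma grading_mul g h : s g = r h -> Phi (mul g h) = Phi g + Phi h.
Proof. by case: grading => _ + _; apply. Qed.

Lemma grading_unit x : Phi (u x) = 0.
Proof.
have uu : mul (u x) (u x) = u x by have := unit_mul (u x); rewrite r_unit.
have := @grading_mul (u x) (u x); rewrite s_unit r_unit uu => /(_ erefl).
by move/eqP; rewrite -subr_eq subrr eq_sym => /eqP.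
Qed.

Lemma grading_inv g : Phi (inv g) = - Phi g.
Proof.
have := @grading_mul g (inv g); rewrite r_inv mulV grading_unit => /(_ erefl).
by move/eqP; rewrite eq_sym addr_eq0 => /eqP ->; rewrite opprK.
Qed.

Lemma grading_mulV x g g' : isotropy r s x g -> isotropy r s x g' ->
  Phi (mul (inv g') g) = Phi g - Phi g'.
Proof.
move=> [rg _] [rg' _]; rewrite grading_mul ?grading_inv; first by rewrite addrC.
by rewrite s_inv rg rg'.
Qed.

Lemma grading_conj g h : s h = r g -> s g = s h ->
  Phi (mul (mul h g) (inv h)) = Phi g.
Proof.
move=> shg sgh; have [_ s_hg] := rs_mul shg.
rewrite grading_mul; last by rewrite s_hg r_inv.
by rewrite grading_mul // grading_inv addrC addKr.
Qed.

Lemma grading_isotropy_inj x : {in isotropy r s x &, injective Phi}.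
Proof.
move=> g g' /[!inE] ig ig' e.
have k1 : mul (inv g') g = u x.
  case: grading => _ _; apply; first exact: isotropy_mulV.
  by rewrite (grading_mulV ig ig') e subrr.
case: ig ig' => rg sg [rg' sg'].
have c1 : s (inv g') = r g by rewrite s_inv rg rg'.
have c2 : s g' = r (inv g') by rewrite r_inv.
have := mulA c2 c1; rewrite mulV k1 -sg' mul_unit rg' -rg unit_mul.
by move->.
Qed.

Lemma image_isotropy_s_r h : Phi @` isotropy r s (s h) = Phi @` isotropy r s (r h).
Proof.
suff sub k : Phi @` isotropy r s (s k) `<=` Phi @` isotropy r s (r k).
  by apply/seteqP; split; [exact: sub | have := sub (inv h); rewrite r_inv s_inv].
move=> _ [g ig <-]; exists (mul (mul k g) (inv k)); first exact: (isotropy_conj ig).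
by case: ig => rg sg; rewrite grading_conj ?rg ?sg.
Qed.

Lemma XC_invariant (C : set A) : groupoid_invariant r s (XC r s Phi C).
Proof.
apply/seteqP; split; last by move=> x Cx; exists (u x); rewrite /= ?s_unit ?r_unit.
by move=> _ [h /= Ch <-]; rewrite /XC /= -image_isotropy_s_r.
Qed.

Lemma XC_r_s (C : set A) h : XC r s Phi C (r h) = XC r s Phi C (s h).
Proof. by rewrite /XC /= image_isotropy_s_r. Qed.

Definition Xmem (a : A) : set X := [set x | (Phi @` isotropy r s x) a].

Lemma XC_Xmem (C : set A) x : XC r s Phi C x <-> forall a, Xmem a x <-> C a.
Proof.
split=> [XCx a | h]; first by change ((Phi @` isotropy r s x) a <-> C a); rewrite XCx.
by apply/seteqP; split=> a /h.
Qed.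

Lemma Xmem_invariant a : groupoid_invariant r s (Xmem a).
Proof.
apply/seteqP; split; last by move=> x Cx; exists (u x); rewrite /= ?s_unit ?r_unit.
move=> _ [h Ch <-].
by change ((Phi @` isotropy r s (r h)) a); rewrite -image_isotropy_s_r.
Qed.

End GroupoidAlgebra.

Lemma closed_eq_hausdorff (T Y : topologicalType) (f g : T -> Y) :
  hausdorff_space Y -> continuous f -> continuous g -> closed [set t | f t = g t].
Proof.
rewrite open_hausdorff => hY cf cg; rewrite -openC openE => t /eqP /hY.
move=> [[A B] /= [/set_mem At /set_mem Bt] [oA oB /eqP AB0]].
apply: (@filterS _ _ _ (f @^-1` A `&` g @^-1` B)).
  move=> t' [/= At' Bt'] e; have : (A `&` B) (f t') by split; rewrite // e.
  by rewrite AB0.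
apply: open_nbhs_nbhs; split; last by split.
by apply: openI; apply: (continuousP _).1.
Qed.

Section EtaleBorel.
Context (X : ptopologicalType) (G : topologicalType)
  (r s : G -> X) (u : X -> G) (mul : G -> G -> G) (inv : G -> G).
Hypothesis etale : etale_groupoid r s u mul inv.

Local Notation borelG := (<<s @open G >>).
Local Notation borelX S := (measurable (S : set (Borel X))).

Lemma etale_groupoid_axioms : groupoid_axioms r s u mul inv.
Proof. by case: etale. Qed.

Lemma borelG_open (O : set G) : open O -> borelG O.
Proof. exact: sub_sigma_algebra. Qed.

Lemma borelGC (S : set G) : borelG S -> borelG (~` S).
Proof. by rewrite -setTD; exact: sigma_algebraCD. Qed.

Lemma borelGI (S T : set G) : borelG S -> borelG T -> borelG (S `&` T).
Proof.
move=> mS mT; rewrite -[S `&` T]setCK setCI -bigcup2E; apply: borelGC.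
by apply: sigma_algebra_bigcup => -[|[|n]] /=; rewrite ?setC0;
  [exact: borelGC | exact: borelGC | exact: sigma_algebra0].
Qed.

Lemma borelG_closed (C : set G) : closed C -> borelG C.
Proof. by move=> cC; rewrite -[C]setCK; apply: borelGC; apply: borelG_open; rewrite openC. Qed.

Lemma borelG_preimage (f : G -> X) (S : set X) :
  continuous f -> borelX S -> borelG (f @^-1` S).
Proof.
move=> cf; apply: (@smallest_sub _ _ _ [set S | borelG (f @^-1` S)]); last first.
  by move=> O oO; apply: borelG_open; exact: (continuousP _).1 cf _ oO.
split => [|S' /= mS'|F mF] /=.
- by rewrite preimage_set0; exact: sigma_algebra0.
- by rewrite setTD -preimage_setC; exact: borelGC.
- by rewrite preimage_bigcup; exact: sigma_algebra_bigcup.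
Qed.

Definition r_chart (W : set G) := [/\ open W,
  (forall a b, W a -> W b -> r a = r b -> a = b) &
  (forall V, open V -> V `<=` W -> open (r @` V))].

Lemma r_chart_sub (U V : set G) : r_chart U -> open V -> V `<=` U -> r_chart V.
Proof.
move=> [_ iU oU] oV VU; split => // [a b Va Vb|V' oV' V'V].
  exact: iU (VU _ Va) (VU _ Vb).
by apply: oU => // x /V'V /VU.
Qed.

Lemma r_chart_image_borel (W : set G) (S : set G) :
  r_chart W -> borelG S -> borelX (r @` (W `&` S)).
Proof.
move=> [oW iW oimW]; move: S; apply: smallest_sub; last first.
  by move=> O oO; apply: sub_sigma_algebra; apply: oimW; [exact: openI | exact: subIsetl].
split => [|S mS|F mF] /=.
- by rewrite setI0 image_set0; exact: measurable0.
- suff -> : r @` (W `&` (setT `\` S)) = r @` W `\` r @` (W `&` S).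
    by apply: measurableD => //; apply: sub_sigma_algebra; exact: oimW.
  apply/seteqP; split => [x [g [Wg [_ nSg]] <-]|x [[g Wg <-] nx]].
    by split; [exists g | move=> [g' [Wg' Sg'] /(iW _ _ Wg' Wg) gg']; rewrite -gg' in nSg].
  by exists g => //; split => //; split => // Sg; apply: nx; exists g.
- by rewrite setI_bigcupr image_bigcup; exact: bigcupT_measurable.
Qed.

Lemma r_chart_basis : exists e : nat -> set G, (forall n, r_chart (e n)) /\
  forall g (O : set G), open O -> O g -> exists2 n, e n g & e n `<=` O.
Proof.
case: etale => _ _ [_ [_ [Bs cBs [Bop Bnb]]]] [_ lhr] _.
have [f finj] := countable_injP _ cBs.
pose e n : set G :=
  if pselect (exists b, [/\ Bs b, f b = n & r_chart b]) is left p then sval (cid p)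
  else set0.
have e_chart n : r_chart (e n).
  rewrite /e; case: pselect => [p|_]; first by case: cid => b [].
  split=> [|a b //|V _]; first exact: open0.
  by rewrite subset0 => ->; rewrite image_set0; exact: open0.
exists e; split => // g O oO Og.
have [U [oU Ug iU oimU]] := lhr g.
have /Bnb [b [Bb bg] bOU] : nbhs g (O `&` U).
  by apply: open_nbhs_nbhs; split => //; exact: openI.
have cb : r_chart b.
  apply: (@r_chart_sub U); [by split | exact: Bop | by move=> x /bOU []].
suff eb : e (f b) = b by exists (f b); rewrite eb // => x /bOU [].
rewrite /e; case: pselect => [p|[]]; last by exists b.
by case: cid => b' [Bb' fb' _] /=; apply: finj; rewrite ?inE.
Qed.

Lemma r_image_borel (S : set G) : borelG S -> borelX (r @` S).
Proof.
move=> mS; have [e [e_chart e_cover]] := r_chart_basis.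
suff -> : r @` S = \bigcup_n r @` (e n `&` S).
  by apply: bigcupT_measurable => n; exact: r_chart_image_borel.
apply/seteqP; split => [_ [g Sg <-]|_ [n _ [g [_ Sg] <-]]]; last by exists g.
by have [n eng _] := e_cover g setT openT I; exists n => //; exists g.
Qed.

Lemma saturation_borel (S : set X) : borelX S -> borelX (r @` (s @^-1` S)).
Proof.
by move=> mS; apply: r_image_borel; apply: borelG_preimage => //; case: etale => _ [].
Qed.

Lemma isotropy_bundle_borel : borelG [set g | r g = s g].
Proof.
case: etale => gpd [cr cs cu _ _] [hG _] _ _.
suff -> : [set g | r g = s g] = [set g | u (r g) = u (s g)].
  apply: borelG_closed; apply: closed_eq_hausdorff => // g;
  apply: continuous_comp; by [apply: cr | apply: cs | apply: cu].
apply/seteqP; split => g /= e; first by rewrite e.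
by have := congr1 r e; rewrite !(r_unit gpd).
Qed.

Variables (A : zmodType) (Phi : G -> A).
Hypothesis grading : injective_grading r s u mul Phi.

Lemma Xmem_borel a : borelX (Xmem r s Phi a).
Proof.
suff -> : Xmem r s Phi a = r @` ([set g | r g = s g] `&` Phi @^-1` [set a]).
  apply: r_image_borel; apply: borelGI; first exact: isotropy_bundle_borel.
  by apply: borelG_open; case: grading.
apply/seteqP; split => [x [g [rg sg] <-]|_ [g [/= rsg Pg] <-]].
  by exists g => //; split; rewrite //= rg sg.
by exists g.
Qed.

End EtaleBorel.

Lemma XC_borel (X : ptopologicalType) (G : topologicalType)
    (r s : G -> X) (u : X -> G) (mul : G -> G -> G) (inv : G -> G)
    (A : countZmodType) (Phi : G -> A) (C : set A) :
  etale_groupoid r s u mul inv -> injective_grading r s u mul Phi ->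
  measurable (XC r s Phi C : set (Borel X)).
Proof.
move=> etale grading.
have mZ a : measurable ([set x | Xmem r s Phi a x <-> C a] : set (Borel X)).
  have mXa := Xmem_borel etale grading a.
  case: (pselect (C a)) => [Ca|nCa].
    suff -> : [set x | Xmem r s Phi a x <-> C a] = Xmem r s Phi a by [].
    by apply/seteqP; split=> x /=; tauto.
  suff -> : [set x | Xmem r s Phi a x <-> C a] = ~` Xmem r s Phi a by exact: measurableC.
  by apply/seteqP; split=> x /=; tauto.
suff -> : XC r s Phi C = ~` \bigcup_a ~` [set x | Xmem r s Phi a x <-> C a].
  apply/measurableC/countable_bigcupT_measurable => [|a]; first exact: countableP.
  exact/measurableC.
apply/seteqP; split=> x; first by move=> /XC_Xmem h [a _]; apply; exact: h.
by move=> h; apply/XC_Xmem => a; apply: contrapT => na; apply: h; exists a.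
Qed.

Section AlmostEverywhere.
Context d (T : measurableType d) (R : realType) (mu : {measure set T -> \bar R}).

Lemma ae_forall_countable (I : countType) (P : I -> T -> Prop) :
  (forall i, {ae mu, forall x, P i x}) -> {ae mu, forall x, forall i, P i x}.
Proof.
move=> aeP; have : {ae mu, forall x, forall n,
    if @unpickle I n is Some i then P i x else True}.
  by apply: ae_foralln => n; case: unpickle => [i|]; [exact: aeP | exact: aeW].
by apply: filterS => x Px i; have := Px (pickle i); rewrite pickleK.
Qed.

Lemma ae_exists (P : T -> Prop) :
  mu setT != 0%E -> {ae mu, forall x, P x} -> exists x, P x.
Proof.
move=> mu0; have : (0 < mu setT)%E by rewrite lt0e mu0 measure_ge0.
by move=> /ae_properfilter_algebraOfSetsType PF /filter_ex.
Qed.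

Lemma ae_notin_negligible (N : set T) : mu.-negligible N -> {ae mu, forall x, ~ N x}.
Proof. by apply: negligibleS => x /= /contrapT. Qed.

Lemma ae_measureP (S : set T) : measurable S ->
  {ae mu, forall x, S x} <-> mu (~` S) = 0%E.
Proof. by move=> mS; apply: negligibleP; exact: measurableC. Qed.

Section LevelSets.
Variables (D : set T) (f : T -> R).
Hypothesis aeD : {ae mu, forall x, D x}.
Hypothesis mu0 : mu setT != 0%E.
Let level q := [set x | D x /\ q < f x].
Let full q := {ae mu, forall x, level q x}.
Hypothesis level_dichotomy : forall q, mu.-negligible (level q) \/ full q.

Let full_le q q' : q' <= q -> full q -> full q'.
Proof.
by move=> le; apply: filterS => x [Dx lt]; split => //; exact: le_lt_trans lt.
Qed.

Let not_full_null q : ~ full q -> {ae mu, forall x, ~ level q x}.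
Proof. by case: (level_dichotomy q) => // /ae_notin_negligible. Qed.

Let full_has_sup : has_sup full.
Proof.
have unbounded (b : T -> R) : {ae mu, forall x, exists n, b x < n%:R}.
  by apply: aeW => x; exists (Num.truncn (b x)).+1; exact: truncnS_gt.
split; apply: contrapT; [move=> /forallNP nfull | move=> /forallNP nub];
  suff [x []] : exists x : T, False; apply: (ae_exists mu0).
- apply: (filterS3 _ _ aeD (unbounded (fun x => - f x))
    (ae_foralln (fun n => not_full_null (nfull (- n%:R))))) => x Dx [n lt] nl.
  by apply: (nl n); split => //; rewrite ltrNl.
- have fulln (n : nat) : full n%:R.
    have /existsNP [q] := nub n%:R; rewrite -existsNE => -[fq /negP].
    by rewrite -ltNge => /ltW le; exact: full_le fq.
  apply: (filterS2 _ _ (ae_foralln fulln) (unbounded f)) => x fx [n lt].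
  by have [_] := fx n; rewrite ltNge (ltW lt).
Qed.

Lemma ae_const_of_level_sets : exists c, {ae mu, forall x, D x -> f x = c}.
Proof.
pose c := sup full; exists c.
have above : {ae mu, forall x, forall k, ~ level (c + k.+1%:R^-1) x}.
  apply: ae_foralln => k; apply: not_full_null => fk.
  have := sup_upper_bound full_has_sup fk; rewrite -/c.
  have : 0 < k.+1%:R^-1 :> R by rewrite invr_gt0.
  by move: (k.+1%:R^-1) => e; lra.
have below : {ae mu, forall x, forall k, level (c - k.+1%:R^-1) x}.
  apply: ae_foralln => k.
  have kpos : 0 < k.+1%:R^-1 :> R by rewrite invr_gt0.
  have [q fq lt] := sup_adherent kpos full_has_sup.
  exact: full_le (ltW lt) fq.
apply: (filterS2 _ _ above below) => x hab hbe Dx; apply/eqP; rewrite eq_le.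
apply/andP; split; rewrite leNgt; apply/negP.
  by move=> /ltr_add_invr [k lt]; apply: (hab k).
move=> /ltr_add_invr [k lt]; have [_] := hbe k; move: lt.
by set e := k.+1%:R^-1; lra.
Qed.

End LevelSets.

End AlmostEverywhere.

Section ErgodicDichotomy.
Context (R : realType) (X : ptopologicalType) (G : topologicalType)
  (r s : G -> X) (u : X -> G) (mul : G -> G -> G) (inv : G -> G)
  (mu : {measure set (Borel X) -> \bar R}).

Local Notation mu_measurable := (mu_measurable_set mu).

Lemma mu_measurable_setI (E : set X) (S : set (Borel X)) :
  mu_measurable E -> measurable S -> mu_measurable (E `&` S).
Proof.
move=> [B [mB nB]] mS; exists (B `&` S); split; first exact: measurableI.
by apply: negligibleS nB => x [[[Ex Sx] nBS]|[[Bx Sx] nES]];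
  [left; split => // Bx; apply: nBS | right; split => // Ex; apply: nES].
Qed.

Lemma mu_measurable_bigcup (F : nat -> set X) :
  (forall n, mu_measurable (F n)) -> mu_measurable (\bigcup_n F n).
Proof.
move=> /(_ _)/cid - /all_sig [B /all_and2 [mB nB]].
exists (\bigcup_n B n); split; first exact: bigcupT_measurable.
apply: negligibleS (negligible_bigcup nB) => x [[[n _ Fx] nBx]|[[n _ Bx] nFx]].
  by exists n => //; left; split => // Bx; apply: nBx; exists n.
by exists n => //; right; split => // Fx; apply: nFx; exists n.
Qed.

Hypothesis etale : etale_groupoid r s u mul inv.
Hypothesis erg : ergodic r s mu.

(* Only the forward implication is needed: the saturation of a Borel
   approximation of E then lies in E up to a null set. *)
Lemma ergodic_dichotomy (E : set X) : mu_measurable E ->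
  {ae mu, forall x : Borel X, forall h, s h = x -> E x -> E (r h)} ->
  mu.-negligible E \/ {ae mu, forall x : Borel X, E x}.
Proof.
move=> [B [mB [Z [mZ Z0 EBZ]]]] [N [mN N0 inv_off_N]].
have gpd := etale_groupoid_axioms etale.
pose good := ~` N `&` ~` Z.
have EB x : good x -> E x <-> B x.
  by move=> [_ nZx]; split => ? ; apply: contrapT => ?; apply: nZx; apply: EBZ; [left|right].
have Einv h : good (s h) -> E (s h) -> E (r h).
  move=> [nN _] Es; apply: contrapT => nE; apply: nN; apply: inv_off_N => /=.
  by move=> /(_ h erefl Es).
pose Y := r @` (s @^-1` (B `&` good)).
have mY : measurable (Y : set (Borel X)).
  rewrite /Y; apply: (saturation_borel etale); apply: measurableI => //.
  by apply: measurableI; apply: measurableC.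
have nN : mu.-negligible N by exists N; split.
have nZ : mu.-negligible Z by exists Z; split.
case: (erg mY (saturation_invariant gpd _)) => Y0.
  have nY : mu.-negligible Y by exists Y; split.
  left; apply: negligibleS (negligibleU (negligibleU nY nN) nZ).
  move=> x Ex; have [Nx|nNx] := pselect (N x); first by left; right.
  have [Zx|nZx] := pselect (Z x); first by right.
  left; left; exists (u x); rewrite /= ?(r_unit gpd) ?(s_unit gpd) //.
  by split => //; apply/(EB _ (conj nNx nZx)).
have ncY : mu.-negligible (~` Y) by exists (~` Y); split => //; exact: measurableC.
right; apply: negligibleS (negligibleU (negligibleU ncY nN) nZ).
move=> x /= nEx; have [Nx|nNx] := pselect (N x); first by left; right.
have [Zx|nZx] := pselect (Z x); first by right.
left; left => -[h [Bh gh] rh]; apply: nEx; rewrite -rh; apply: Einv => //.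
exact/(EB _ gh).
Qed.

End ErgodicDichotomy.


Lemma compact_bump (R : realType) (T : topologicalType) (O : set T) (t : T) :
  locally_compact [set: T] -> hausdorff_space T -> open O -> O t ->
  exists f : T -> R, [/\ Cc f, [set y | f y != 0] `<=` O &
    exists2 V : set T, open_nbhs t V & V `<=` [set y | f y = 1]].
Proof.
move=> lc hT oO Ot; have [K] := lc t I.
rewrite /within nbhsE => -[N [oN Nt] NK] [cK clK].
pose O' := O `&` N.
have sep : uniform_separator [set t] (~` O').
  apply: (@locally_compact_completely_regular T R lc hT); last by move=> /(_ (conj Ot Nt)).
  by apply: open_closedC; exact: openI.
pose h := Urysohn (R := R) [set t] (~` O').
have hc : continuous h := @Urysohn_continuous _ _ _ _.
(* [h] is 0 at [t] and 1 off [O `&` N], so [f] is 1 where [h < 1/2] and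
   vanishes off [O `&` N]. *)
pose f y := Num.min 1 (2 * (1 - h y)).
have h1 y : ~ O' y -> h y = 1 by move=> nO'y; apply: (Urysohn_sub1 sep); exists y.
have f0 y : ~ O' y -> f y = 0.
  by move=> /h1 hy; rewrite /f hy subrr mulr0; apply/min_idPr; exact: ler01.
have suppO' : [set y | f y != 0] `<=` O'.
  by move=> y; apply: contraPP => /f0 fy0; rewrite /= fy0 eqxx.
exists f; split.
- split.
    move=> y; apply: (@continuous_min R T (fun=> 1) (fun y => 2 * (1 - h y))).
      exact: cst_continuous.
    apply: continuousM; first exact: cst_continuous.
    by apply: continuousB; [exact: cst_continuous | exact: hc].
  apply: (subclosed_compact _ cK); first exact: closed_closure.
  rewrite (closure_id K).1 //; apply: closureS => y /suppO' [_ Ny].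
  exact: NK Ny I.
- by move=> y /suppO' [].
exists (h @^-1` [set z | z < 2^-1]).
  split; first by apply: ((@continuousP _ _ _).1 hc); exact: open_lt.
  have h0 : h t = 0 by apply: (Urysohn_sub0 sep); exists t.
  by rewrite /= h0 invr_gt0.
by move=> y /= hy; apply/min_idPl; lra.
Qed.

Section FieldOfStates.
Context (R : realType) (X : ptopologicalType) (G : topologicalType)
  (r s : G -> X) (u : X -> G) (mul : G -> G -> G) (inv : G -> G)
  (A : countZmodType) (Phi : G -> A)
  (mu : {measure set (Borel X) -> \bar R}) (phi : X -> G -> R[i]).
Hypothesis etale : etale_groupoid r s u mul inv.
Hypothesis grading : injective_grading r s u mul Phi.

Let gpd := etale_groupoid_axioms etale.

Definition isotropy_pairing (f : G -> R) (x : X) : R[i] :=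
  \sum_(g \in isotropy r s x) ((f g)%:C%C * phi x g).

(* The arrow of grade [b] in G^x_x, which is unique by injectivity of the
   grading; [u x] is a junk value when there is none. *)
Definition isotropy_lift (b : A) (x : X) : G :=
  if pselect (exists g, isotropy r s x g /\ Phi g = b) is left e then sval (cid e)
  else u x.

Lemma isotropy_liftE b x g : isotropy r s x g -> Phi g = b -> isotropy_lift b x = g.
Proof.
move=> ig Pg; rewrite /isotropy_lift; case: pselect => [e|[]]; last by exists g.
case: cid => g' [ig' Pg'] /=.
by apply: (grading_isotropy_inj gpd grading (mem_set ig') (mem_set ig)); rewrite Pg Pg'.
Qed.

Definition grade_value (b : A) (x : X) : R[i] := phi x (isotropy_lift b x).

Lemma grade_value_isotropy x g : isotropy r s x g -> grade_value (Phi g) x = phi x g.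
Proof. by move=> ig; rewrite /grade_value (isotropy_liftE ig erefl). Qed.

Lemma isotropy_pairing_chart (f : G -> R) (W : set G) b x g :
  r_chart r W -> [set y | f y != 0] `<=` W -> W `<=` Phi @^-1` [set b] ->
  isotropy r s x g -> f g = 1 -> isotropy_pairing f x = grade_value b x.
Proof.
move=> [_ iW _] fW WPhi ig fg1.
have Wg : W g by apply: fW; rewrite /= fg1 oner_neq0.
rewrite /grade_value (isotropy_liftE ig (WPhi _ Wg)) /isotropy_pairing.
rewrite -(fsbig_widen [set g] (isotropy r s x)) => [|y -> //|y [iy /= ny]].
  by rewrite fsbig_set1 fg1 mul1r.
have [fy0|fy] := eqVneq (f y) 0; first by rewrite fy0 mul0r.
case: ny; apply: iW => //; first exact: fW.
by case: iy => -> _; case: ig => -> _.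
Qed.

Lemma grade_bump_cover b : exists (f : nat -> G -> R) (V : nat -> set G),
  [/\ forall n, Cc (f n), forall n, open (V n),
      (forall n x g, V n g -> isotropy r s x g ->
         isotropy_pairing (f n) x = grade_value b x) &
      forall g, Phi g = b -> exists n, V n g].
Proof.
have [e [e_chart e_cover]] := r_chart_basis etale.
case: etale => _ _ [hG [lc _]] _ _.
pose bump n (f : G -> R) := [/\ Cc f, e n `<=` [set y | f y = 1] & exists m,
  [set y | f y != 0] `<=` e m /\ e m `<=` Phi @^-1` [set b]].
pose f n : G -> R := if pselect (exists f, bump n f) is left p then sval (cid p) else fun=> 0.
pose V n := if pselect (exists f, bump n f) is left _ then e n else set0.
have fV n : V n !=set0 -> bump n (f n) /\ V n = e n.
  by rewrite /f /V; case: pselect => [p|_ /set0P]; [case: cid | rewrite eqxx].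
exists f, V; split.
- move=> n; rewrite /f; case: pselect => [p|_]; first by case: cid => ? [].
  by split; [exact: cst_continuous | rewrite (_ : [set _ | _] = set0) ?closure0;
    [exact: compact0 | apply/seteqP; split => y //=; rewrite eqxx]].
- by move=> n; rewrite /V; case: pselect => _; [case: (e_chart n) | exact: open0].
- move=> n x g Vg ig; have [[_ enf [m [fm mPhi]]] Ve] := fV n (ex_intro _ g Vg).
  by apply: (isotropy_pairing_chart (e_chart m) fm mPhi ig); apply: enf; rewrite -Ve.
move=> g Pg.
have oPhi : open (Phi @^-1` [set b]) by case: grading.
have [m emg mPhi] := e_cover g _ oPhi Pg.
have oem : open (e m) by case: (e_chart m).
have [fb [cfb fbm [W [oW Wg] Wf]]] := compact_bump R lc hG oem emg.
have [n eng enW] := e_cover g W oW Wg.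
have bn : bump n fb by split => //; [by move=> y /enW /Wf | by exists m].
by exists n; rewrite /V; case: pselect => // -[]; exists fb.
Qed.

Variable B : set A.

Lemma isotropy_lift_XC x b : XC r s Phi B x -> B b ->
  isotropy r s x (isotropy_lift b x) /\ Phi (isotropy_lift b x) = b.
Proof.
move=> XBx Bb; have [g ig Pg] : (Phi @` isotropy r s x) b by rewrite XBx.
by rewrite (isotropy_liftE ig Pg).
Qed.

Lemma grade_value_level_mu_measurable (pr : R[i] -> R) b q :
  (forall f, Cc f -> mu_measurable_fun mu (fun x => pr (isotropy_pairing f x))) ->
  B b -> mu_measurable_set mu [set x | XC r s Phi B x /\ q < pr (grade_value b x)].
Proof.
move=> pr_meas Bb; have [f [V [cf oV fV V_cover]]] := grade_bump_cover b.
pose piece n := (fun x => pr (isotropy_pairing (f n) x)) @^-1` `]q, +oo[%classic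
  `&` (XC r s Phi B `&` r @` (V n `&` [set g | r g = s g])).
suff -> : [set x | XC r s Phi B x /\ q < pr (grade_value b x)] = \bigcup_n piece n.
  apply: mu_measurable_bigcup => n; rewrite /piece.
  apply: mu_measurable_setI; first exact: (pr_meas _ (cf n) _ (measurable_itv _)).
  apply: measurableI; first exact: (XC_borel B etale grading).
  apply: (r_image_borel etale); apply: borelGI; last exact: (isotropy_bundle_borel etale).
  exact: sub_sigma_algebra.
apply/seteqP; split => [x [XBx qx]|x [n _ [/= qx [XBx [g [Vg rsg] rgx]]]]].
  have [ig Pg] := isotropy_lift_XC XBx Bb; have [n Vn] := V_cover _ Pg.
  exists n => //; split; first by rewrite /= (fV n x _ Vn ig) in_itv /= andbT.
  split => //; exists (isotropy_lift b x); last by case: ig.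
  by split => //=; case: ig => -> ->.
have ig : isotropy r s x g by split; rewrite -rgx ?rsg.
by split => //; move: qx; rewrite (fV n x g Vg ig) in_itv /= andbT.
Qed.

Lemma grade_value_conj b h : B b -> XC r s Phi B (s h) ->
  (forall g, isotropy r s (s h) g -> phi (s h) g = phi (r h) (mul (mul h g) (inv h))) ->
  grade_value b (r h) = grade_value b (s h).
Proof.
move=> Bb XBs phi_conj; have [ig Pg] := isotropy_lift_XC XBs Bb.
have ig' := isotropy_conj gpd ig erefl.
have Pg' : Phi (mul (mul h (isotropy_lift b (s h))) (inv h)) = b.
  by case: ig => rg sg; rewrite (grading_conj gpd grading) ?rg ?sg.
by rewrite /grade_value (isotropy_liftE ig' Pg') phi_conj.
Qed.

Hypothesis erg : ergodic r s mu.
Hypothesis mu0 : mu setT != 0%E.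
Hypothesis XB_ae : {ae mu, forall x : Borel X, XC r s Phi B x}.
Hypothesis phi_field : measurable_field_of_states r s u mul inv mu phi.
Hypothesis phi_conj : {ae mu, forall x : Borel X, forall g h : G,
  isotropy r s x g -> s h = x -> phi x g = phi (r h) (mul (mul h g) (inv h))}.

Lemma grade_value_component_ae_const (pr : R[i] -> R) b :
  (forall f, Cc f -> mu_measurable_fun mu (fun x => pr (isotropy_pairing f x))) ->
  B b -> exists c, {ae mu, forall x : Borel X, XC r s Phi B x -> pr (grade_value b x) = c}.
Proof.
move=> pr_meas Bb; apply: ae_const_of_level_sets XB_ae mu0 _ => q.
apply: (ergodic_dichotomy etale erg); first exact: grade_value_level_mu_measurable.
apply: filterS phi_conj => x conj_x h shx; subst x => -[XBs lt].
split; first by rewrite (XC_r_s gpd grading).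
by rewrite (grade_value_conj Bb XBs (fun g ig => conj_x g h ig erefl)).
Qed.

Lemma grade_value_ae_const b :
  B b -> exists c, {ae mu, forall x : Borel X, XC r s Phi B x -> grade_value b x = c}.
Proof.
move=> Bb; have [_ pr_meas] := phi_field.
have [cre hre] := grade_value_component_ae_const (fun f cf => (pr_meas f cf).1) Bb.
have [cim him] := grade_value_component_ae_const (fun f cf => (pr_meas f cf).2) Bb.
exists (cre +i* cim)%C; apply: (filterS2 _ _ hre him) => x hx1 hx2 XBx.
by move: (hx1 XBx) (hx2 XBx); case: (grade_value b x) => ? ? /= -> ->.
Qed.

Lemma grade_value_ae_uniform : exists psi : A -> R[i],
  {ae mu, forall x : Borel X, XC r s Phi B x -> forall a, B a -> grade_value a x = psi a}.
Proof.
have /choice [psi psiE] : forall a, exists c : R[i],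
    {ae mu, forall x : Borel X, XC r s Phi B x -> B a -> grade_value a x = c}.
  move=> a; have [Ba|nBa] := pselect (B a); last by exists 0; apply: aeW => x _ /nBa.
  have [c hc] := grade_value_ae_const Ba.
  by exists c; apply: filterS hc => x + XBx _; apply.
by exists psi; apply: filterS (ae_forall_countable psiE) => x hx XBx a; exact: hx.
Qed.

Hypothesis B_subgroup : is_subgroup B.

Lemma state_group_of_isotropy_state x (psi : A -> R[i]) :
  XC r s Phi B x -> state_isotropy r s u mul inv x (phi x) ->
  (forall a, B a -> grade_value a x = psi a) -> state_group B psi.
Proof.
move=> XBx [phi1 phi_pos] psiE; have [B0 BB] := B_subgroup.
split.
  rewrite -psiE // /grade_value.
  by rewrite (isotropy_liftE (isotropy_unit gpd x) (grading_unit gpd grading x)).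
move=> n cs bs Bbs; pose lift k := isotropy_lift_XC XBx (Bbs k).
have := phi_pos n cs (fun k => isotropy_lift (bs k) x) (fun k => (lift k).1).
congr (0 <= _); apply: eq_bigr => k _; apply: eq_bigr => l _.
rewrite -psiE; last exact: BB.
congr (_ * _); have [igk Pgk] := lift k; have [igl Pgl] := lift l.
have -> : bs l - bs k =
    Phi (mul (inv (isotropy_lift (bs k) x)) (isotropy_lift (bs l) x)).
  by rewrite (grading_mulV gpd grading igl igk) Pgk Pgl.
by rewrite (grade_value_isotropy (isotropy_mulV gpd igl igk)).
Qed.

Lemma field_of_states_descends : exists psi : A -> R[i], state_group B psi /\
  {ae mu, forall x : Borel X, XC r s Phi B x ->
     forall g, isotropy r s x g -> psi (Phi g) = phi x g}.
Proof.
have [psi psiE] := grade_value_ae_uniform.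
have [x0 [psiE0 XBx0]] := ae_exists mu0
  (filterS2 _ (fun x p q => conj p q) psiE XB_ae).
exists psi; split.
  exact: (state_group_of_isotropy_state XBx0 (phi_field.1 x0) (psiE0 XBx0)).
apply: filterS psiE => x psiEx XBx g ig.
have Bg : B (Phi g) by rewrite -XBx; exists g.
by rewrite -(psiEx XBx _ Bg) grade_value_isotropy.
Qed.

End FieldOfStates.

Section EssentialIsotropy.
Context (R : realType) (X : ptopologicalType) (G : topologicalType)
  (r s : G -> X) (u : X -> G) (mul : G -> G -> G) (inv : G -> G)
  (A : countZmodType) (Phi : G -> A) (mu : {measure set (Borel X) -> \bar R}).
Hypothesis etale : etale_groupoid r s u mul inv.
Hypothesis grading : injective_grading r s u mul Phi.
Hypothesis erg : ergodic r s mu.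
Hypothesis mu0 : mu setT != 0%E.

Let gpd := etale_groupoid_axioms etale.
Let ae_filter : Filter (nbhs (almost_everywhere mu)) := ae_filter_ringOfSetsType mu.

Definition ess_isotropy : set A :=
  [set a | {ae mu, forall x : Borel X, Xmem r s Phi a x}].

Lemma ess_isotropy_subgroup : is_subgroup ess_isotropy.
Proof.
split.
  apply: aeW => x; exists (u x); first exact: (isotropy_unit gpd x).
  exact: (grading_unit gpd grading x).
move=> a b; rewrite /ess_isotropy /= => aa ab.
apply: (filterS2 ae_filter _ aa ab) => x [g ig <-] [g' ig' <-].
exists (mul (inv g') g); first exact: (isotropy_mulV gpd ig ig').
exact: (grading_mulV gpd grading ig ig').
Qed.

Lemma Xmem_ae_iff a : {ae mu, forall x : Borel X, Xmem r s Phi a x <-> ess_isotropy a}.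
Proof.
have mXa := Xmem_borel etale grading a.
case: (erg mXa (Xmem_invariant gpd grading a)) => [Xa0|Xa1].
  have nXa : {ae mu, forall x : Borel X, ~ Xmem r s Phi a x}.
    by apply: ae_notin_negligible; exists (Xmem r s Phi a); split.
  have not_ess : ~ ess_isotropy a.
    move=> ess_a; have [y []] := ae_exists mu0
      (filterS2 ae_filter (fun y p q => conj p q) nXa ess_a).
    by move/[apply].
  by apply: (@filterS _ _ ae_filter _ _ _ nXa) => x nXx; split.
have ess_a : ess_isotropy a by apply/(ae_measureP _ mXa).
by apply: (@filterS _ _ ae_filter _ _ _ ess_a) => x.
Qed.

Lemma XC_ess_isotropy_ae : {ae mu, forall x : Borel X, XC r s Phi ess_isotropy x}.
Proof.
by apply: (@filterS _ _ ae_filter _ _ _ (ae_forall_countable Xmem_ae_iff)) => x /XC_Xmem.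
Qed.

Lemma XC_ae_unique (C C' : set A) :
  {ae mu, forall x : Borel X, XC r s Phi C x} ->
  {ae mu, forall x : Borel X, XC r s Phi C' x} -> C = C'.
Proof.
move=> aeC aeC'.
have [x [<- <-]] := ae_exists mu0 (filterS2 ae_filter (fun x p q => conj p q) aeC aeC').
by [].
Qed.

End EssentialIsotropy.

Theorem theorem7p3 (R : realType) (X : ptopologicalType) (G : topologicalType)
    (r s : G -> X) (u : X -> G) (mul : G -> G -> G) (inv : G -> G)
    (A : countZmodType) (Phi : G -> A) (c : G -> R) (beta : R)
    (mu : {measure set (Borel X) -> \bar R}) :
  etale_groupoid r s u mul inv ->
  injective_grading r s u mul Phi ->
  continuous_hom r s mul c ->
  in_Delta r s beta c mu ->
  mu setT != 0%E ->
  ergodic r s mu ->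
  (* (1) *)
  (forall C : set A, is_subgroup C ->
     measurable (XC r s Phi C : set (Borel X)) /\ groupoid_invariant r s (XC r s Phi C)) /\
  (* (2) and (3) *)
  exists B : set A,
    [/\ is_subgroup B,
        mu (~` XC r s Phi B) = 0%E,
        (forall B' : set A, is_subgroup B' -> mu (~` XC r s Phi B') = 0%E -> B' = B) &
        (forall phi : X -> G -> R[i],
           measurable_field_of_states r s u mul inv mu phi ->
           {ae mu, forall x : Borel X, forall g h : G,
               isotropy r s x g -> s h = x ->
               phi x g = phi (r h) (mul (mul h g) (inv h))} ->
           exists psi : A -> R[i],
             state_group B psi /\
             {ae mu, forall x : Borel X, XC r s Phi B x ->
                forall g : G, isotropy r s x g -> psi (Phi g) = phi x g})].
Proof.
move=> etale grading _ _ mu0 erg.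
have XC_meas C := XC_borel C etale grading.
split=> [C _|].
  by split; [exact: XC_meas | exact: (XC_invariant (etale_groupoid_axioms etale) grading)].
have XB_ae := XC_ess_isotropy_ae etale grading erg mu0.
have B_subgroup := ess_isotropy_subgroup mu etale grading.
exists (ess_isotropy r s Phi mu); split => //.
- exact/(ae_measureP _ (XC_meas _)).
- move=> B' _ /(ae_measureP _ (XC_meas _)) XB'_ae.
  exact: (XC_ae_unique mu0 XB'_ae XB_ae).
- move=> phi phi_field phi_conj.
  exact: (field_of_states_descends etale grading erg mu0 XB_ae phi_field phi_conj B_subgroup).
Qed.
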